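(* Let $a,b,c\ge 0$ and $r\ge 0$. The diversity-multiplexing tradeoff of the full-duplex $(a,b,c)$-relay channel, which in the high-SNR limit is given by $$d_{f.d.}(r)=\min\Big\{a+b+c-\alpha-\beta-\gamma \;:\; \min\big(\max(\alpha,\gamma),\max(\beta,\gamma)\big)\le r,\ 0\le\alpha\le a,\ 0\le\beta\le b,\ 0\le\gamma\le c\Big\},$$ equals $$d_{f.d.}(r)=\big(\min(a,b)-r\big)^{+}+(c-r)^{+},$$ where $x^+=\max(x,0)$.
   Context: The $(a,b,c)$-relay channel: a source $S$ communicates with a destination $D$ with the help of a relay $R$; the source signal is broadcast to $R$ and $D$, and the source and relay signals superpose at $D$. The channel gains $h_{sr},h_{rd},h_{sd}$ of the S-R, R-D, S-D links are i.i.d. circularly-symmetric complex Gaussian $\mathcal{CN}(0,1)$, quasi-static (constant over a codeword, independent across codewords), known only at the receivers (CSIR, no CSIT). The average SNRs of the S-R, R-D, S-D links are $\rho^a,\rho^b,\rho^c$ respectively, $a,b,c\ge 0$. A code family with rate $R$ and error probability $P_e$ achieves multiplexing gain $r=\lim_{\rho\to\infty} R/\log\rho$ and diversity $d=-\lim_{\rho\to\infty}\log P_e/\log\rho$; the DMT $d(r)$ is the supremum of achievable diversity at multiplexing gain $r$. The exponential orders are $\alpha=\lim_{\rho\to\infty}\frac{\log(1+|h_{sr}|^2\rho^a)}{\log\rho}$, and similarly $\beta,\gamma$ for $|h_{rd}|^2\rho^b$ and $|h_{sd}|^2\rho^c$. In the full-duplex case the relay can transmit and receive simultaneously, and (via a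 constant-gap capacity approximation) the outage event at multiplexing gain $r$ is $\{\min(\max(\alpha,\gamma),\max(\beta,\gamma))\le r\}$, which gives the optimization formula in the claim. *)

From Stdlib Require Import Reals.
Open Scope R_scope.

Definition pos_part (x : R) : R := Rmax x 0.

Definition fd_feasible (a b c r al be ga : R) : Prop :=
  Rmin (Rmax al ga) (Rmax be ga) <= r /\
  0 <= al <= a /\ 0 <= be <= b /\ 0 <= ga <= c.

Definition fd_obj (a b c al be ga : R) : R := a + b + c - al - be - ga.

Definition is_fd_dmt (a b c r d : R) : Prop :=
  (exists al be ga, fd_feasible a b c r al be ga /\ fd_obj a b c al be ga = d) /\
  (forall al be ga, fd_feasible a b c r al be ga -> d <= fd_obj a b c al be ga).

From Stdlib Require Import Reals Lra.
Open Scope R_scope.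

(* The objective splits as a sum of per-link "residuals"
   (a-al) + (b-be) + (c-ga), each nonnegative.  The outage event
   min(max(al,ga), max(be,ga)) <= r is the union of the two cut events
   {al <= r, ga <= r} (S-R and S-D links both weak) and
   {be <= r, ga <= r} (R-D and S-D links both weak).
   - Lower bound: on either cut event, the two weak links cost at least
     (x - r)^+ each, and (min(a,b) - r)^+ is below either of them.
   - Attainment: when a <= b, the point (min(a,r), b, min(c,r)) lies in
     the first cut event and reaches the bound exactly.
   The problem is symmetric under exchanging the S-R and R-D links
   (a,al) <-> (b,be), which reduces the theorem to the case a <= b. *)

Lemma sub_min_pos_part (x r : R) : x - Rmin x r = pos_part (x - r).
Proof.
  unfold pos_part, Rmin, Rmax; repeat destruct Rle_dec; lra.
Qed.

Lemma pos_part_le_residual (x y r : R) :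
  y <= x -> y <= r -> pos_part (x - r) <= x - y.
Proof.
  intros hyx hyr; unfold pos_part; apply Rmax_lub; lra.
Qed.

Lemma pos_part_min_le_l (a b r : R) :
  pos_part (Rmin a b - r) <= pos_part (a - r).
Proof.
  unfold pos_part; apply Rmax_lub.
  - apply Rle_trans with (a - r); [pose proof (Rmin_l a b); lra | apply Rmax_l].
  - apply Rmax_r.
Qed.

Lemma outage_cases (al be ga r : R) :
  Rmin (Rmax al ga) (Rmax be ga) <= r ->
  (al <= r /\ ga <= r) \/ (be <= r /\ ga <= r).
Proof.
  unfold Rmin, Rmax; repeat destruct Rle_dec; intro; first [left; lra | right; lra].
Qed.

Lemma fd_feasible_swap (a b c r al be ga : R) :
  fd_feasible a b c r al be ga -> fd_feasible b a c r be al ga.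
Proof.
  intros [hout [hal [hbe hga]]]; repeat split; try lra.
  now rewrite Rmin_comm.
Qed.

Lemma fd_obj_swap (a b c al be ga : R) :
  fd_obj b a c be al ga = fd_obj a b c al be ga.
Proof. unfold fd_obj; ring. Qed.

Lemma is_fd_dmt_swap (a b c r d : R) :
  is_fd_dmt a b c r d -> is_fd_dmt b a c r d.
Proof.
  intros [[al [be [ga [hfeas hobj]]]] hlow]; split.
  - exists be, al, ga; split.
    + now apply fd_feasible_swap.
    + now rewrite fd_obj_swap.
  - intros al' be' ga' hfeas'.
    rewrite <- fd_obj_swap; apply hlow, fd_feasible_swap, hfeas'.
Qed.

Lemma fd_obj_lower_bound (a b c r al be ga : R) :
  fd_feasible a b c r al be ga ->
  pos_part (Rmin a b - r) + pos_part (c - r) <= fd_obj a b c al be ga.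
Proof.
  intros [hout [hal [hbe hga]]]; unfold fd_obj.
  assert (hc_cost : ga <= r -> pos_part (c - r) <= c - ga)
    by (intro; apply pos_part_le_residual; lra).
  destruct (outage_cases al be ga r hout) as [[halr hgar] | [hber hgar]].
  - assert (ha_cost : pos_part (a - r) <= a - al)
      by (apply pos_part_le_residual; lra).
    pose proof (pos_part_min_le_l a b r); pose proof (hc_cost hgar); lra.
  - assert (hb_cost : pos_part (b - r) <= b - be)
      by (apply pos_part_le_residual; lra).
    pose proof (pos_part_min_le_l b a r) as hmin; rewrite (Rmin_comm b a) in hmin.
    pose proof (hc_cost hgar); lra.
Qed.

Lemma fd_optimum_attained (a b c r : R) :
  0 <= a -> 0 <= b -> 0 <= c -> 0 <= r -> a <= b ->
  fd_feasible a b c r (Rmin a r) b (Rmin c r) /\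
  fd_obj a b c (Rmin a r) b (Rmin c r)
    = pos_part (Rmin a b - r) + pos_part (c - r).
Proof.
  intros ha hb hc hr hab.
  pose proof (Rmin_l a r); pose proof (Rmin_r a r).
  pose proof (Rmin_l c r); pose proof (Rmin_r c r).
  assert (Rmin a r >= 0) by (unfold Rmin; destruct Rle_dec; lra).
  assert (Rmin c r >= 0) by (unfold Rmin; destruct Rle_dec; lra).
  split.
  - repeat split; try lra.
    apply Rle_trans with (Rmax (Rmin a r) (Rmin c r)); [apply Rmin_l |].
    now apply Rmax_lub.
  - rewrite (Rmin_left a b hab), <- !sub_min_pos_part; unfold fd_obj; ring.
Qed.

Theorem lemma1 (a b c r : R) (ha : 0 <= a) (hb : 0 <= b) (hc : 0 <= c) (hr : 0 <= r) :
  is_fd_dmt a b c r (pos_part (Rmin a b - r) + pos_part (c - r)).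
Proof.
  destruct (Rle_dec a b) as [hab | hba].
  - split.
    + exists (Rmin a r), b, (Rmin c r).
      now apply fd_optimum_attained.
    + intros al be ga; apply fd_obj_lower_bound.
  - apply is_fd_dmt_swap; rewrite Rmin_comm; split.
    + exists (Rmin b r), a, (Rmin c r).
      apply fd_optimum_attained; lra.
    + intros al be ga; apply fd_obj_lower_bound.
Qed.
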